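(* Let $K$ be a compact and connected subgroup of $U(N)$, let $A\in\mathbb{C}^{N\times N}$ and let $\varphi_0\in\mathbb{R}$. The following are equivalent: (a) $e^{i\varphi_0}\mathcal{O}_K(A)=\mathcal{O}_K(A)$; (b) $e^{i\varphi_0}W_K(C,A)=W_K(C,A)$ for all $C\in\mathbb{C}^{N\times N}$; (c) $e^{i\varphi_0}W_K(A,A)=W_K(A,A)$. Moreover, if $\varphi_0$ is an irrational multiple of $2\pi$ and one of (a), (b), (c) holds for $\varphi_0$, then all of them hold with $\varphi_0$ replaced by any $\varphi\in\mathbb{R}$.
   Context: $U(N)$ is the group of unitary $N\times N$ complex matrices. For a compact connected subgroup $K\subset U(N)$ and $C,A\in\mathbb{C}^{N\times N}$, the relative $C$-numerical range is $W_K(C,A)=\{\mathrm{tr}(C^\dagger UAU^\dagger)\mid U\in K\}$, and the $K$-orbit of $A$ is $\mathcal{O}_K(A)=\{UAU^\dagger\mid U\in K\}$. *)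

(* Complex numbers are real-closed's
   [complex R] = R[i] over a [realType] R, seen as a numClosedFieldType so that
   MathComp-Analysis equips it (and its matrices) with the norm topology. *)
From mathcomp Require Import all_boot all_algebra.
From mathcomp Require Import all_classical all_reals all_analysis.
From mathcomp Require Export complex.
Import GRing.Theory Num.Theory.
Export numFieldTopology.Exports numFieldNormedType.Exports.
Set Implicit Arguments.
Unset Strict Implicit.
Unset Printing Implicit Defensive.
Local Open Scope ring_scope.
Local Open Scope classical_set_scope.
Local Open Scope complex_scope.

Definition Cplx (R : realType) : numClosedFieldType := R[i].

Definition adj (R : realType) (N : nat) (A : 'M[Cplx R]_N) : 'M[Cplx R]_N :=
  (map_mx conjc A)^T.

Definition unitary (R : realType) (N : nat) (U : 'M[Cplx R]_N) : Prop :=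
  U *m adj U = 1%:M.

Definition compact_connected_subgroup_UN (R : realType) (N : nat)
    (K : set 'M[Cplx R]_N) : Prop :=
  (forall U, K U -> unitary U) /\
  K 1%:M /\
  (forall U V, K U -> K V -> K (U *m V)) /\
  (forall U, K U -> K (invmx U)) /\
  compact K /\ connected K.

Definition orbitK (R : realType) (N : nat) (K : set 'M[Cplx R]_N)
    (A : 'M[Cplx R]_N) : set 'M[Cplx R]_N :=
  [set U *m A *m adj U | U in K].

Definition WK (R : realType) (N : nat) (K : set 'M[Cplx R]_N)
    (C A : 'M[Cplx R]_N) : set (Cplx R) :=
  [set \tr (adj C *m (U *m A *m adj U)) | U in K].

Definition expi (R : realType) (phi : R) : Cplx R :=
  (cos phi)%:C + 'i * (sin phi)%:C.

Definition cond_a (R : realType) (N : nat) (K : set 'M[Cplx R]_N)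
    (A : 'M[Cplx R]_N) (phi : R) : Prop :=
  [set expi phi *: X | X in orbitK K A] = orbitK K A.

Definition cond_b (R : realType) (N : nat) (K : set 'M[Cplx R]_N)
    (A : 'M[Cplx R]_N) (phi : R) : Prop :=
  forall C : 'M[Cplx R]_N,
    [set expi phi * w | w in WK K C A] = WK K C A.

Definition cond_c (R : realType) (N : nat) (K : set 'M[Cplx R]_N)
    (A : 'M[Cplx R]_N) (phi : R) : Prop :=
  [set expi phi * w | w in WK K A A] = WK K A A.

From mathcomp Require Import all_boot all_algebra.
From mathcomp Require Import all_classical all_reals all_analysis.
From mathcomp Require Import ring lra.
Import order.Order.TTheory GRing.Theory Num.Theory.

(* Call [phi] a phase of [A] when [e^{i phi} A = U A U^dagger] for some [U] in
   [K].  For a phase, multiplication by [e^{i phi}] permutes the orbit, hence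
   every [W_K(C, A)], so (a) -> (b) -> (c).  Conversely (c) produces a phase by
   the equality case of Cauchy-Schwarz for the Hilbert-Schmidt inner product.
   The phases form an additive subgroup of R containing [2 pi], closed because
   the orbit of [A] is compact.  A closed subgroup of R is either cyclic or all
   of R, and it cannot be cyclic if it contains [2 pi] and an irrational
   multiple of it. *)

Set Implicit Arguments.
Unset Strict Implicit.
Unset Printing Implicit Defensive.

Local Open Scope ring_scope.
Local Open Scope classical_set_scope.

Lemma floor_divr_remainder (R : archiRealFieldType) (g x : R) : 0 < g ->
  0 <= x - (Num.floor (x / g))%:~R * g < g.
Proof.
move=> g0; have /andP[lo hi] := floor_itv (x / g).
rewrite ler_pdivlMr // in lo; rewrite ltr_pdivrMr // intrD mulrDl mul1r in hi.
by rewrite subr_ge0 lo ltrBlDl.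
Qed.

Section ClosedSubgroupsOfR.
Variables (R : realType) (G : set R).
Hypothesis G_subr : forall x y, G x -> G y -> G (x - y).

Lemma subgroup_mulz x (k : int) : G x -> G (k%:~R * x).
Proof.
move=> Gx; have G0 : G 0 by rewrite -(subrr x); apply: G_subr.
have Gn (n : nat) : G (n%:R * x).
  elim: n => [|n IHn]; first by rewrite mul0r.
  have -> : n.+1%:R * x = n%:R * x - (0 - x) by rewrite sub0r opprK -natr1 mulrDl mul1r.
  by apply: G_subr => //; apply: G_subr.
case: k => n; first by rewrite -pmulrn.
by rewrite NegzE mulrNz mulNr -pmulrn -[X in G X]add0r; apply: G_subr.
Qed.

Local Notation Gpos := [set g | G g /\ 0 < g].
Hypothesis Gpos_neq0 : Gpos !=set0.

Let Gpos_lbound : has_lbound Gpos. Proof. by exists 0 => y [_ /ltW]. Qed.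
Let Gpos_inf : has_inf Gpos. Proof. by split. Qed.

Lemma inf_subgroup_pos_ge0 : 0 <= inf Gpos.
Proof. by apply: lb_le_inf => // y [_ /ltW]. Qed.

(* Otherwise two elements of [Gpos] in ]inf, 2 inf[ would differ by a positive
   element below the infimum. *)
Lemma inf_subgroup_pos_mem : 0 < inf Gpos -> G (inf Gpos).
Proof.
set a := inf Gpos => a0.
have [[]//|a_notin] := pselect (Gpos a).
have [g1 Pg1] := inf_adherent a0 Gpos_inf; rewrite -/a => g1_lt.
have a_g1 : a < g1 := inf_lb_strict Gpos_lbound a_notin Pg1.
have /inf_adherent/(_ Gpos_inf) [g2 Pg2] : 0 < g1 - a by rewrite subr_gt0.
rewrite -/a => g2_lt; have a_g2 : a < g2 := inf_lb_strict Gpos_lbound a_notin Pg2.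
have Pg12 : Gpos (g1 - g2).
  by split; [apply: G_subr; [case: Pg1|case: Pg2] | rewrite subr_gt0; lra].
by have := ge_inf Gpos_lbound Pg12; rewrite -/a; lra.
Qed.

Lemma inf_subgroup_pos_cyclic y : 0 < inf Gpos -> G y ->
  exists k : int, y = k%:~R * inf Gpos.
Proof.
set a := inf Gpos => a0 Gy; exists (Num.floor (y / a)).
have /andP[r_ge0 r_lt] := floor_divr_remainder y a0.
have Gr : G (y - (Num.floor (y / a))%:~R * a).
  by apply: G_subr => //; apply/subgroup_mulz/inf_subgroup_pos_mem.
have [r_gt0|] := ltrP 0 (y - (Num.floor (y / a))%:~R * a).
  by have := ge_inf Gpos_lbound (conj Gr r_gt0); rewrite -/a; lra.
lra.
Qed.

Lemma inf_subgroup_pos_eq0_dense : inf Gpos = 0 -> closed G -> forall x, G x.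
Proof.
move=> a0 /closure_id -> x B /nbhs_ballP[e /= e0 eB].
have [g [Gg g0]] := inf_adherent e0 Gpos_inf; rewrite a0 add0r => ge.
exists ((Num.floor (x / g))%:~R * g); split; first exact: subgroup_mulz.
have /andP[r_ge0 r_lt] := floor_divr_remainder x g0.
by apply: eB; rewrite -ball_normE /= ger0_norm //; lra.
Qed.

End ClosedSubgroupsOfR.

Lemma closed_subgroupT_irrational (R : realType) (G : set R) (p a : R) :
  (forall x y, G x -> G y -> G (x - y)) -> closed G ->
  G p -> 0 < p -> G a -> (~ exists q : rat, a = p * ratr q) -> forall x, G x.
Proof.
move=> G_subr Gcl Gp p0 Ga a_irr.
have Gpos_neq0 : [set g | G g /\ 0 < g] !=set0 by exists p.
have [inf_gt0|inf_le0] := ltrP 0 (inf [set g | G g /\ 0 < g]); last first.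
  apply: inf_subgroup_pos_eq0_dense => //; apply/eqP.
  by rewrite eq_le inf_le0 inf_subgroup_pos_ge0.
have [m pm] := inf_subgroup_pos_cyclic G_subr Gpos_neq0 inf_gt0 Gp.
have [n an] := inf_subgroup_pos_cyclic G_subr Gpos_neq0 inf_gt0 Ga.
exfalso; apply: a_irr; exists (n%:~R / m%:~R).
have m_neq0 : m%:~R != 0 :> R by apply: contraTneq p0 => m0; rewrite pm m0 mul0r ltxx.
by rewrite fmorph_div !rmorph_int pm an; field.
Qed.

Local Open Scope complex_scope.

Section Expi.
Variable R : realType.

Lemma expiD (a b : R) : expi (a + b) = expi a * expi b.
Proof. by rewrite /expi cosD sinD; simpc; rewrite [_ * sin b + _]addrC. Qed.

Lemma expi0 : expi (0 : R) = 1.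
Proof. by rewrite /expi cos0 sin0; simpc. Qed.

Lemma expi2pi : expi (2 * pi : R) = 1.
Proof. by rewrite /expi mulr_natl cos2pi sin2pi; simpc. Qed.

Lemma expiJ (a : R) : conjc (expi a) = expi (- a).
Proof. by rewrite /expi cosN sinN; simpc. Qed.

Lemma expiNl (a : R) : expi (- a) * expi a = 1.
Proof. by rewrite -expiD addNr expi0. Qed.

End Expi.

Section Adjoint.
Variables (R : realType) (N : nat).
Local Notation C := (Cplx R).
Implicit Types (c : C) (U X Y : 'M[C]_N).

Lemma adjM X Y : adj (X *m Y) = adj Y *m adj X.
Proof. by rewrite /adj map_mxM trmx_mul. Qed.

Lemma adjK X : adj (adj X) = X.
Proof. by apply/matrixP => i j; rewrite /adj !mxE conjcK. Qed.

Lemma adj1 : adj (1%:M : 'M[C]_N) = 1%:M.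
Proof. by rewrite /adj map_mx1 trmx1. Qed.

Lemma adjZ c X : adj (c *: X) = conjc c *: adj X.
Proof. by apply/matrixP => i j; rewrite /adj !mxE rmorphM. Qed.

Lemma adjB X Y : adj (X - Y) = adj X - adj Y.
Proof. by apply/matrixP => i j; rewrite /adj !mxE rmorphB. Qed.

Lemma mxtrace_adj X : \tr (adj X) = conjc (\tr X).
Proof. by rewrite /adj mxtrace_tr (trace_map_mx (conjc : {rmorphism C -> C})). Qed.

Lemma unitary_mulVmx U : unitary U -> adj U *m U = 1%:M.
Proof. exact: mulmx1C. Qed.

Lemma unitary_invmx U : unitary U -> invmx U = adj U.
Proof.
move=> Uu; have [U_unit _] := mulmx1_unit Uu.
by rewrite -[invmx U]mulmx1 -Uu mulmxA mulVmx // mul1mx.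
Qed.

Lemma conj_mulmx U V X :
  (U *m V) *m X *m adj (U *m V) = U *m (V *m X *m adj V) *m adj U.
Proof. by rewrite adjM !mulmxA. Qed.

Lemma unitary_conjK U X : unitary U -> adj U *m (U *m X *m adj U) *m U = X.
Proof.
by move=> Uu; rewrite !mulmxA unitary_mulVmx // mul1mx -mulmxA unitary_mulVmx ?mulmx1.
Qed.

Lemma unitary_conjZ U X c c' : unitary U -> c' * c = 1 ->
  U *m X *m adj U = c *: X -> adj U *m X *m U = c' *: X.
Proof.
move=> Uu cc' UX; rewrite -{2}(unitary_conjK X Uu) UX.
by rewrite -scalemxAr -scalemxAl scalerA cc' scale1r.
Qed.

Definition hsdot X Y : C := \tr (adj X *m Y).

Lemma hsdotZl c X Y : hsdot (c *: X) Y = conjc c * hsdot X Y.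
Proof. by rewrite /hsdot adjZ -scalemxAl mxtraceZ. Qed.

Lemma hsdotZr c X Y : hsdot X (c *: Y) = c * hsdot X Y.
Proof. by rewrite /hsdot -scalemxAr mxtraceZ. Qed.

Lemma hsdotJ X Y : conjc (hsdot X Y) = hsdot Y X.
Proof. by rewrite /hsdot -mxtrace_adj adjM adjK. Qed.

Lemma hsdot_conj_unitary U X Y : unitary U ->
  hsdot (U *m X *m adj U) (U *m Y *m adj U) = hsdot X Y.
Proof.
move=> Uu; rewrite /hsdot !adjM adjK !mulmxA mxtrace_mulC !mulmxA.
rewrite [adj U *m U](unitary_mulVmx Uu) mul1mx -(mulmxA (adj X)).
by rewrite [adj U *m U](unitary_mulVmx Uu) mulmx1.
Qed.

Lemma hsdotxx_eq0 X : hsdot X X = 0 -> X = 0.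
Proof.
have hsE : hsdot X X = \sum_j \sum_i X i j * conjc (X i j).
  rewrite /hsdot /mxtrace; apply: eq_bigr => k _; rewrite mxE.
  by apply: eq_bigr => l _; rewrite /adj !mxE mulrC.
rewrite hsE => /psumr_eq0P hX; apply/matrixP => i j; rewrite mxE.
have /psumr_eq0P : \sum_i X i j * conjc (X i j) = 0.
  by apply: hX => // k _; apply: sumr_ge0 => l _; exact: mulcJ_ge0.
move=> /(_ (fun l _ => mulcJ_ge0 _) i isT) /eqP.
by rewrite -sqr_normc sqrf_eq0 normr_eq0 => /eqP.
Qed.

(* Equality case of Cauchy-Schwarz: [<Y - X, Y - X>] expands to
   [<Y,Y> - 2 Re <X,Y> + <X,X>], which vanishes. *)
Lemma hsdot_eq X Y : hsdot Y Y = hsdot X X -> hsdot X Y = hsdot X X -> Y = X.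
Proof.
move=> YY XY; apply/eqP; rewrite -subr_eq0; apply/eqP/hsdotxx_eq0.
have YX : hsdot Y X = hsdot X X by rewrite -hsdotJ XY hsdotJ.
rewrite /hsdot adjB mulmxBl !mulmxBr !raddfB /=.
by rewrite -!/(hsdot _ _) YY XY YX !subrr addr0.
Qed.

End Adjoint.

Lemma mx_continuous (F : numFieldType) (T : topologicalType) m n
    (f : T -> 'M[F]_(m, n)) :
  (forall i j, continuous (fun x => f x i j)) -> continuous f.
Proof.
move=> f_cont x B /nbhs_ballP[e e0 eB].
apply: (filterS (P := fun y => forall i j, ball (f x i j) e (f y i j))).
  by move=> y fy; apply: eB; split.
apply: filter_forall => i; apply: filter_forall => j.
have : nbhs (f x i j) (ball (f x i j) e) by apply: nbhsx_ballx.
by move=> /(f_cont i j x); rewrite nbhs_filterE.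
Qed.

Section Continuity.
Variable R : realType.
Local Notation C := (Cplx R).

Lemma conjc_continuous : continuous (conjc : C -> C).
Proof.
move=> x B /nbhs_ballP[e e0 eB]; apply/nbhs_ballP; exists e => // y xy.
by apply: eB; move: xy; rewrite -!ball_normE /= -rmorphB normcJ.
Qed.

Lemma normc_real (r : R) : `|r%:C : C| = `|r|%:C.
Proof. by rewrite normc_def /= expr0n addr0 sqrtr_sqr. Qed.

Lemma realc_continuous : continuous (fun r : R => r%:C : C).
Proof.
move=> x B /nbhs_ballP[e /= e0 eB]; apply/nbhs_ballP.
have eRe : (complex.Re e)%:C = e by apply: RRe_real; exact: gtr0_real.
exists (complex.Re e); first by rewrite /= -ltcR eRe.
move=> y xy; apply: eB; move: xy; rewrite -!ball_normE /=.
by rewrite -rmorphB normc_real -eRe ltcR.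
Qed.

Lemma expi_continuous : continuous (@expi R).
Proof.
move=> x; rewrite /expi; apply: cvgD.
  exact: continuous_comp (@continuous_cos R x) (@realc_continuous _).
apply: cvgM; first exact: cvg_cst.
exact: continuous_comp (@continuous_sin R x) (@realc_continuous _).
Qed.

Lemma conj_continuous N (A : 'M[C]_N) :
  continuous (fun V : 'M[C]_N => V *m A *m adj V).
Proof.
have sum_continuous (F : 'I_N -> 'M[C]_N -> C) :
    (forall k, continuous (F k)) -> continuous (fun V => \sum_k F k V).
  by move=> F_cont; apply: continuous_big => //; exact: add_continuous.
have mul_continuous (f g : 'M[C]_N -> C) :
    continuous f -> continuous g -> continuous (fun V => f V * g V).
  by move=> f_cont g_cont V; exact: cvgM (f_cont V) (g_cont V).
apply: mx_continuous => i j.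
have -> : (fun V : 'M[C]_N => (V *m A *m adj V) i j) =
    fun V => \sum_k (\sum_l V i l * A l k) * conjc (V j k).
  by apply: funext => V; rewrite !mxE; apply: eq_bigr => k _; rewrite !mxE.
apply: (sum_continuous) => k; apply: (mul_continuous).
  apply: (sum_continuous) => l; apply: (mul_continuous).
    exact: coord_continuous.
  exact: cst_continuous.
by move=> V; exact: continuous_comp (@coord_continuous _ N N j k V) (@conjc_continuous _).
Qed.

End Continuity.

Section Phases.
Variables (R : realType) (N : nat) (K : set 'M[Cplx R]_N) (A : 'M[Cplx R]_N).

Definition phases : set R := [set phi | orbitK K A (expi phi *: A)].

Lemma cond_a_b phi : cond_a K A phi -> cond_b K A phi.
Proof.
move=> ha C; have WKE : WK K C A = (hsdot C) @` orbitK K A by rewrite image_comp.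
rewrite WKE -[in RHS]ha !image_comp; apply: eq_imagel => X _ /=.
by rewrite hsdotZr.
Qed.

Lemma closed_phases : compact K -> closed phases.
Proof.
move=> cK; have orbit_closed : closed (orbitK K A).
  apply: (compact_closed (@norm_hausdorff _ _)).
  exact: continuous_compact (continuous_subspaceT (@conj_continuous _ _ A)) cK.
have phase_continuous : continuous (fun phi => expi phi *: A).
  by move=> x; apply: continuousZr_tmp; exact: (@expi_continuous _ x).
exact: (proj1 (continuous_closedP _) phase_continuous _ orbit_closed).
Qed.

Hypothesis hK : compact_connected_subgroup_UN K.

Let K_unitary U : K U -> unitary U. Proof. by case: hK => K_U _; exact: K_U. Qed.
Let K1 : K 1%:M. Proof. by case: hK => _ []. Qed.
Let KM U V : K U -> K V -> K (U *m V).
Proof. by case: hK => _ [_ [K_M _]]; exact: K_M. Qed.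
Let Kadj U : K U -> K (adj U).
Proof.
move=> KU; rewrite -(unitary_invmx (K_unitary KU)).
by case: hK => _ [_ [_ [K_V _]]]; exact: K_V.
Qed.

Lemma phases_2pi : phases (2 * pi).
Proof. by exists 1%:M => //; rewrite expi2pi scale1r mul1mx adj1 mulmx1. Qed.

Lemma phasesB x y : phases x -> phases y -> phases (x - y).
Proof.
move=> [U KU UA] [V KV VA]; exists (adj V *m U); first exact/KM/KU/Kadj.
rewrite conj_mulmx UA -scalemxAr -scalemxAl adjK.
by rewrite (unitary_conjZ (K_unitary KV) (expiNl y) VA) scalerA -expiD.
Qed.

Lemma phases_cond_a phi : phases phi -> cond_a K A phi.
Proof.
move=> [U KU UA]; have UuA := unitary_conjZ (K_unitary KU) (expiNl phi) UA.
apply/seteqP; split=> [_ [_ [V KV <-] <-]|_ [V KV <-]].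
  by exists (V *m U); [exact: KM | rewrite conj_mulmx UA -scalemxAr -scalemxAl].
exists (V *m adj U *m A *m adj (V *m adj U)).
  by exists (V *m adj U) => //; apply/KM/Kadj.
rewrite conj_mulmx adjK UuA -scalemxAr -scalemxAl scalerA.
by rewrite mulrC expiNl scale1r.
Qed.

(* (c) puts [<A, A>] in [e^{i phi} W_K(A, A)], so some [Y = e^{i phi} U A U^dagger]
   has the norm of [A] and [<A, Y> = <A, A>]; then [Y = A] by [hsdot_eq]. *)
Lemma cond_c_phases phi : cond_c K A phi -> phases phi.
Proof.
move=> hc; have : WK K A A (hsdot A A).
  by exists 1%:M => //; rewrite mul1mx adj1 mulmx1.
rewrite -hc => -[_ [U KU <-] AY].
have Uu := K_unitary KU.
have YA : expi phi *: (U *m A *m adj U) = A.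
  apply: hsdot_eq; last by rewrite hsdotZr.
  by rewrite hsdotZl hsdotZr hsdot_conj_unitary // expiJ mulrA expiNl mul1r.
exists (adj U); first exact: Kadj.
by rewrite adjK -{1}YA -scalemxAr -scalemxAl unitary_conjK.
Qed.

End Phases.

Theorem proposition2p12 (R : realType) (N : nat) (K : set 'M[Cplx R]_N)
    (A : 'M[Cplx R]_N) (phi0 : R) :
  compact_connected_subgroup_UN K ->
  ((cond_a K A phi0 <-> cond_b K A phi0) /\
   (cond_b K A phi0 <-> cond_c K A phi0)) /\
  ((~ exists q : rat, phi0 = 2 * pi * ratr q) ->
   (cond_a K A phi0 \/ cond_b K A phi0 \/ cond_c K A phi0) ->
   forall phi : R, cond_a K A phi /\ cond_b K A phi /\ cond_c K A phi).
Proof.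
move=> hK; have cK : compact K by case: hK => _ [_ [_ [_ []]]].
have b_c phi : cond_b K A phi -> cond_c K A phi by apply.
have c_a phi : cond_c K A phi -> cond_a K A phi.
  by move=> /(cond_c_phases hK); exact: phases_cond_a.
have a_b := @cond_a_b _ _ K A.
split; first by split; [split=> [/a_b|/b_c/c_a] | split=> [/b_c|/c_a/a_b]].
move=> phi0_irr phi0_cond phi.
have phi0_phase : phases K A phi0.
  by apply: (cond_c_phases hK); case: phi0_cond => [/a_b/b_c|[/b_c|]].
have /(phases_cond_a hK) phi_a : phases K A phi.
  apply: (closed_subgroupT_irrational (phasesB hK) (closed_phases (A:=A) cK)
            (phases_2pi A hK) _ phi0_phase phi0_irr).
  by rewrite mulr_gt0 ?pi_gt0.
by split=> //; split; [exact: a_b | exact/b_c/a_b].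
Qed.
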